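(* Let $E$ be a finite extension of $\mathbf Q_p$ with ring of integers $O_E$. Let $\chi_{y,A}:A\to E$ be an ordinary character with values $(y_1,y_2,y_3)$ at $(Y_1,Y_2,Y_3)$. For $w\in\mathcal S_3$, define numbers $q(w,y)$ as follows: - $q(1,y)=1$; - $q(s_1,y)=1$ if $y_2^{-1}\in O_E$, and $q(s_1,y)=y_2^{-1}$ if $y_2\in O_E$; - $q(s_2,y)=y_2$ if $y_2^{-1}\in O_E$, and $q(s_2,y)=1$ if $y_2\in O_E$; - $q(s_1s_2,y)=q^{-1}y_1y_2$; - $q(s_2s_1,y)=q^{-1}y_1$; - $q(s_1s_2s_1,y)=q^{-1}y_1y_2$ if $y_2^{-1}\in O_E$, and $q(s_1s_2s_1,y)=q^{-1}y_1$ if $y_2\in O_E$. When $y_2$ is a unit, either of the two prescribed values may be used, consistently across $s_1,s_2,s_1s_2s_1$. Let $\Phi=1\otimes1$ be the canonical generator of $I_A(\chi_{y,A})$, and let $L(\chi_{y,A})$ be the $O_E$-submodule of $I_A(\chi_{y,A})$ that is free with basis $\{q(w,y)T_w\Phi\}_{w\in\mathcal S_3}$. Then $L(\chi_{y,A})=H_{O_E}\Phi$. In particular, $L(\chi_{y,A})$ is stable under $H_{O_E}$ and is an $O_E$-integral structure of $I_A(\chi_{y,A})$ (the canonical one).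
   Context: Let $q$ be a power of $p$, namely the residue cardinality of a non-archimedean local field $F$. Let $H$ be the $\mathbf Z[q]$-algebra ($q$ an indeterminate) generated by $T^{\pm1},S_1$ with relations $$(S_1+1)(S_1-q)=0,\quad T^3S_1=S_1T^3,\quad S_1S_2S_1=S_2S_1S_2,\quad TS_2=S_1T.$$ For a commutative ring $R$ with a map $\mathbf Z[q]\to R$, set $H_R=H\otimes_{\mathbf Z[q]}R$; for $R=E$ or $O_E$, the indeterminate $q$ is sent to the integer $q$. In $H\otimes\mathbf Z[q^{\pm1}]$, the elements $S_i$ are invertible, and one puts $$Y_1=qS_1^{-1}S_2^{-1}T,\qquad Y_2=S_2^{-1}TS_1,\qquad Y_3=q^{-1}TS_1S_2.$$ Let $A$ be the commutative subalgebra generated over $\mathbf Z[q^{\pm1}]$ by $Y_i^{\pm1}$; it is a Laurent polynomial algebra in the $Y_i$. A character $\chi:A\to E$ is a ring morphism sending $q$ to $q$, and it is determined by its values $(y_1,y_2,y_3)$. The standard module is $I_A(\chi)=H_E\otimes_{A,\chi}E$; it is 6-dimensional, and its canonical generator is $\Phi=1\otimes1$. The character $\chi$ is called ordinary if $\chi(A\cap H)\subset O_E$ (equivalently, $(y_1y_2y_3)^{\pm1}$, $q(y_iy_j)^{\pm1}$ and $qy_i^{\pm1}$ lie in $O_E$ for $i\neq j$) and moreover $y_1\in O_E$ and $y_3^{-1}\in O_E$. $\mathcal S_3$ is the Coxeter group with generators $s_1,s_2$ and length function $\ell$. One sets $T_{s_i}=S_i$ and $T_{ww'}=T_wT_{w'}$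 whenever $\ell(ww')=\ell(w)+\ell(w')$. An $O_E$-integral structure of a finite-dimensional $H_E$-module $M$ is a free $O_E$-submodule which is $H_{O_E}$-stable and contains an $E$-basis of $M$. *)

From HB Require Import structures.
From mathcomp Require Import all_boot all_order all_algebra.
Set Implicit Arguments. Unset Strict Implicit. Unset Printing Implicit Defensive.
Import Order.TTheory GRing.Theory Num.Theory.
Local Open Scope ring_scope.

Definition valuation_ring (E : fieldType) (O : pred E) : Prop :=
  [/\ 1 \in O,
      (forall x y, x \in O -> y \in O -> x - y \in O),
      (forall x y, x \in O -> y \in O -> x * y \in O) &
      (forall x, x != 0 -> (x \in O) \/ (x^-1 \in O))].

(* H_E-modules.  H is generated by T^{+-1}, S_1 with the relations         *)
(*   (S1+1)(S1-q)=0, T^3 S1 = S1 T^3, S1 S2 S1 = S2 S1 S2, T S2 = S1 T.     *)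
(* The last relation defines S2 = T^-1 S1 T.  A (left) H_E-module structure *)
(* on the column space E^6 is given by matrices t (invertible) and s1       *)
(* satisfying these relations, with q sent to the integer q.               *)
Section HeckeModule.
Variable (E : fieldType).
Local Notation M := 'M[E]_6.
Local Notation V := 'cV[E]_6.

Definition S2op (t s1 : M) : M := invmx t *m s1 *m t.

Definition hecke_rels (q : nat) (t s1 : M) : Prop :=
  [/\ t \in unitmx,
      (s1 + 1%:M) *m (s1 - (q%:R : E)%:M) = 0,
      (t *m t *m t) *m s1 = s1 *m (t *m t *m t) &
      s1 *m S2op t s1 *m s1 = S2op t s1 *m s1 *m S2op t s1].

Definition Y1op (q : nat) (t s1 : M) : M :=
  (q%:R : E) *: (invmx s1 *m invmx (S2op t s1) *m t).
Definition Y2op (t s1 : M) : M := invmx (S2op t s1) *m t *m s1.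
Definition Y3op (q : nat) (t s1 : M) : M :=
  (q%:R : E)^-1 *: (t *m s1 *m S2op t s1).

(* The cyclic R-submodule generated by phi, for the subring R (given as a   *)
(* predicate) of E: the smallest R-submodule containing phi and stable under *)
(* T, T^-1 and S1 (which generate H as an algebra).  With R = O_E this is    *)
(* H_{O_E} phi; with R = E (predT) it is H_E phi.                           *)
Inductive cyc_span (R : pred E) (t s1 : M) (phi : V) : V -> Prop :=
  | cs_gen : cyc_span R t s1 phi phi
  | cs_add v w : cyc_span R t s1 phi v -> cyc_span R t s1 phi w ->
                 cyc_span R t s1 phi (v + w)
  | cs_scale a v : a \in R -> cyc_span R t s1 phi v ->
                 cyc_span R t s1 phi (a *: v)
  | cs_T v : cyc_span R t s1 phi v -> cyc_span R t s1 phi (t *m v)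
  | cs_Tinv v : cyc_span R t s1 phi v -> cyc_span R t s1 phi (invmx t *m v)
  | cs_S1 v : cyc_span R t s1 phi v -> cyc_span R t s1 phi (s1 *m v).

End HeckeModule.

Inductive S3w := w1 | ws1 | ws2 | ws1s2 | ws2s1 | ws1s2s1.

Definition S3_all : seq S3w := [:: w1; ws1; ws2; ws1s2; ws2s1; ws1s2s1].

Definition Tw (E : fieldType) (t s1 : 'M[E]_6) (w : S3w) : 'M[E]_6 :=
  let s2 := S2op t s1 in
  match w with
  | w1 => 1%:M
  | ws1 => s1
  | ws2 => s2
  | ws1s2 => s1 *m s2
  | ws2s1 => s2 *m s1
  | ws1s2s1 => s1 *m s2 *m s1
  end.

(* The numbers q(w,y).  The boolean b selects the branch:                  *)
(*   b = true  : the branch "y2^-1 in O_E",  b = false : "y2 in O_E".       *)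
Definition qwy (E : fieldType) (b : bool) (q : nat) (y1 y2 : E) (w : S3w) : E :=
  let qi := (q%:R : E)^-1 in
  match w with
  | w1 => 1
  | ws1 => if b then 1 else y2^-1
  | ws2 => if b then y2 else 1
  | ws1s2 => qi * y1 * y2
  | ws2s1 => qi * y1
  | ws1s2s1 => if b then qi * y1 * y2 else qi * y1
  end.

Definition ordinary (E : fieldType) (O : pred E) (q : nat) (y1 y2 y3 : E) : Prop :=
  let qq := (q%:R : E) in
  [/\ y1 * y2 * y3 \in O /\ (y1 * y2 * y3)^-1 \in O,
      (qq * (y1 * y2) \in O /\ qq * (y1 * y2)^-1 \in O) /\
      (qq * (y1 * y3) \in O /\ qq * (y1 * y3)^-1 \in O) /\
      (qq * (y2 * y3) \in O /\ qq * (y2 * y3)^-1 \in O),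
      (qq * y1 \in O /\ qq * y1^-1 \in O) /\ (qq * y2 \in O /\ qq * y2^-1 \in O) /\
      (qq * y3 \in O /\ qq * y3^-1 \in O) &
      y1 \in O /\ y3^-1 \in O].

Definition Lspan (E : fieldType) (O : pred E) (b : bool) (q : nat) (y1 y2 : E)
    (t s1 : 'M[E]_6) (phi : 'cV[E]_6) (v : 'cV[E]_6) : Prop :=
  exists c : S3w -> E, (forall w, c w \in O) /\
    v = \sum_(w <- S3_all) (c w * qwy b q y1 y2 w) *: (Tw t s1 w *m phi).

From HB Require Import structures.
From mathcomp Require Import all_boot all_order all_algebra.
From mathcomp Require Import ring.
Set Implicit Arguments. Unset Strict Implicit. Unset Printing Implicit Defensive.
Import Order.TTheory GRing.Theory Num.Theory.
Local Open Scope ring_scope.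

(* In the basis (T_w Phi)_w, the eigenvalue equations for Y1, Y2, Y3 make T act
   by a monomial matrix with entries q^-1 y1, y2 and q y3, while S1 acts through
   its quadratic relation on the pairs (T_w Phi, T_(s1 w) Phi).  After rescaling
   the basis by the q(w,y), the matrices of T, T^-1 and S1 have entries that are
   integral exactly by ordinarity and the choice of branch, so L(chi) is stable
   under H_{O_E}; as it contains Phi, it contains H_{O_E} Phi.  Conversely each
   q(w,y) T_w Phi is an integral multiple of an explicit word in T^(+-1), S1
   applied to Phi.  Finally the six T_w Phi span the six-dimensional module, so
   they are linearly independent. *)

Lemma unitmx_of_spanning (R : fieldType) n (B : 'M[R]_n) :
  (forall v : 'cV[R]_n, exists c, v = B *m c) -> B \in unitmx.
Proof.
move=> spanB.
have [C defC] : exists C : 'I_n -> 'cV[R]_n, forall j, delta_mx j 0 = B *m C j.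
  exact: (@fin_all_exists _ (fun=> 'cV[R]_n) (fun j c => delta_mx j 0 = B *m c)).
have BC1 : B *m (\matrix_(i, j) C j i 0) = 1%:M.
  apply/matrixP => i j; transitivity ((B *m C j) i 0).
    by rewrite !mxE; apply: eq_bigr => k _; rewrite mxE.
  by rewrite -defC !mxE eqxx andbT.
by case: (mulmx1_unit BC1).
Qed.

Lemma invmx_mul_scale (R : fieldType) n m (A : 'M[R]_n) (u v : 'M[R]_(n, m)) k :
  A \in unitmx -> k != 0 -> A *m u = k *: v -> invmx A *m v = k^-1 *: u.
Proof. by move=> Aunit k_neq0 Au; rewrite -[v](scalerK k_neq0) -Au -scalemxAr mulKmx. Qed.

Section HeckeRelations.
Variables (E : fieldType) (q : nat) (t s1 : 'M[E]_6).
Local Notation qq := (q%:R : E).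
Local Notation S2 := (S2op t s1).
Hypotheses (q_neq0 : qq != 0) (hH : hecke_rels q t s1).

Lemma unitmx_T : t \in unitmx. Proof. by case: hH. Qed.

Lemma S1_quadratic : s1 *m s1 = (qq - 1) *: s1 + qq%:M.
Proof.
case: hH => _ + _ _.
rewrite mulmxDl mulmxBr mul_mx_scalar mul1mx addrA => /eqP; rewrite subr_eq0 => /eqP <-.
by rewrite scalerBl scale1r [_ - _ + s1]addrC addrA subrK addrC subrK.
Qed.

Lemma S1_quadratic_vec (v : 'cV[E]_6) :
  s1 *m (s1 *m v) = qq *: v + (qq - 1) *: (s1 *m v).
Proof. by rewrite mulmxA S1_quadratic mulmxDl mul_scalar_mx -scalemxAl addrC. Qed.

Lemma unitmx_S1 : s1 \in unitmx.
Proof.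
have S1_inv : s1 *m (qq^-1 *: (s1 - (qq - 1)%:M)) = 1%:M.
  rewrite -scalemxAr mulmxBr S1_quadratic mul_mx_scalar addrAC subrr add0r.
  by rewrite scale_scalar_mx mulVf.
by case: (mulmx1_unit S1_inv).
Qed.

Lemma unitmx_S2 : S2 \in unitmx.
Proof. by rewrite /S2op !unitmx_mul unitmx_inv unitmx_T unitmx_S1. Qed.

Lemma T_S2 : t *m S2 = s1 *m t.
Proof. by rewrite /S2op !mulmxA mulmxV ?unitmx_T // mul1mx. Qed.

Lemma S1_S2_braid : s1 *m S2 *m s1 = S2 *m s1 *m S2.
Proof. by case: hH. Qed.

End HeckeRelations.

Section StandardModule.
Variables (E : fieldType) (q : nat) (t s1 : 'M[E]_6) (phi : 'cV[E]_6).
Variables (y1 y2 y3 : E).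
Local Notation qq := (q%:R : E).
Local Notation S2 := (S2op t s1).
Hypotheses (q_neq0 : qq != 0) (hH : hecke_rels q t s1).
Hypotheses (y1_neq0 : y1 != 0) (y2_neq0 : y2 != 0) (y3_neq0 : y3 != 0).
Hypotheses (hY1 : Y1op q t s1 *m phi = y1 *: phi)
  (hY2 : Y2op t s1 *m phi = y2 *: phi)
  (hY3 : Y3op q t s1 *m phi = y3 *: phi).

Let unitmx_S1 := unitmx_S1 q_neq0 hH.
Let unitmx_S2 := unitmx_S2 q_neq0 hH.

Lemma T_phi : t *m phi = (qq^-1 * y1) *: (S2 *m (s1 *m phi)).
Proof.
have : S2 *m (s1 *m (Y1op q t s1 *m phi)) = qq *: (t *m phi).
  rewrite /Y1op -scalemxAl -!scalemxAr !mulmxA (mulmxK unitmx_S1).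
  by rewrite mulmxV ?unitmx_S2 // mul1mx.
rewrite hY1 -!scalemxAr => Y1_phi.
by rewrite -scalerA Y1_phi scalerA mulVf // scale1r.
Qed.

Lemma T_S1_phi : t *m (s1 *m phi) = y2 *: (S2 *m phi).
Proof.
have <- : S2 *m (Y2op t s1 *m phi) = t *m (s1 *m phi).
  by rewrite /Y2op !mulmxA mulmxV ?unitmx_S2 // mul1mx.
by rewrite hY2 scalemxAr.
Qed.

Lemma T_S1_S2_phi : t *m (s1 *m (S2 *m phi)) = (qq * y3) *: phi.
Proof.
have <- : qq *: (Y3op q t s1 *m phi) = t *m (s1 *m (S2 *m phi)).
  by rewrite /Y3op -scalemxAl scalerA divff // scale1r !mulmxA.
by rewrite hY3 scalerA.
Qed.

Definition Twphi (w : S3w) : 'cV[E]_6 := Tw t s1 w *m phi.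

Definition Twcomb (c : S3w -> E) : 'cV[E]_6 := \sum_(w <- S3_all) c w *: Twphi w.

Lemma Twphi1 : Twphi w1 = phi. Proof. by rewrite /Twphi /= mul1mx. Qed.
Lemma Twphi_s1 : Twphi ws1 = s1 *m phi. Proof. by []. Qed.
Lemma Twphi_s2 : Twphi ws2 = S2 *m phi. Proof. by []. Qed.
Lemma Twphi_s1s2 : Twphi ws1s2 = s1 *m (S2 *m phi).
Proof. by rewrite /Twphi /= mulmxA. Qed.
Lemma Twphi_s2s1 : Twphi ws2s1 = S2 *m (s1 *m phi).
Proof. by rewrite /Twphi /= mulmxA. Qed.
Lemma Twphi_s1s2s1 : Twphi ws1s2s1 = s1 *m (S2 *m (s1 *m phi)).
Proof. by rewrite /Twphi /= !mulmxA. Qed.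
Lemma Twphi_s2s1s2 : Twphi ws1s2s1 = S2 *m (s1 *m (S2 *m phi)).
Proof. by rewrite /Twphi /= (S1_S2_braid hH) !mulmxA. Qed.

Lemma T_Twphi1 : t *m Twphi w1 = (qq^-1 * y1) *: Twphi ws2s1.
Proof. by rewrite Twphi1 T_phi Twphi_s2s1. Qed.
Lemma T_Twphi_s1 : t *m Twphi ws1 = y2 *: Twphi ws2.
Proof. by rewrite Twphi_s1 T_S1_phi. Qed.
Lemma T_Twphi_s2 : t *m Twphi ws2 = (qq^-1 * y1) *: Twphi ws1s2s1.
Proof. by rewrite Twphi_s2 mulmxA (T_S2 hH) -mulmxA T_phi -scalemxAr Twphi_s1s2s1. Qed.
Lemma T_Twphi_s1s2 : t *m Twphi ws1s2 = (qq * y3) *: Twphi w1.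
Proof. by rewrite Twphi_s1s2 T_S1_S2_phi Twphi1. Qed.
Lemma T_Twphi_s2s1 : t *m Twphi ws2s1 = y2 *: Twphi ws1s2.
Proof. by rewrite Twphi_s2s1 mulmxA (T_S2 hH) -mulmxA T_S1_phi -scalemxAr Twphi_s1s2. Qed.
Lemma T_Twphi_s1s2s1 : t *m Twphi ws1s2s1 = (qq * y3) *: Twphi ws1.
Proof. by rewrite Twphi_s2s1s2 mulmxA (T_S2 hH) -mulmxA T_S1_S2_phi -scalemxAr Twphi_s1. Qed.

Lemma S1_Twphi1 : s1 *m Twphi w1 = Twphi ws1.
Proof. by rewrite Twphi1. Qed.
Lemma S1_Twphi_s1 : s1 *m Twphi ws1 = qq *: Twphi w1 + (qq - 1) *: Twphi ws1.
Proof. by rewrite Twphi_s1 (S1_quadratic_vec hH) Twphi1. Qed.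
Lemma S1_Twphi_s2 : s1 *m Twphi ws2 = Twphi ws1s2.
Proof. by rewrite Twphi_s2 Twphi_s1s2. Qed.
Lemma S1_Twphi_s1s2 : s1 *m Twphi ws1s2 = qq *: Twphi ws2 + (qq - 1) *: Twphi ws1s2.
Proof. by rewrite Twphi_s1s2 (S1_quadratic_vec hH) Twphi_s2. Qed.
Lemma S1_Twphi_s2s1 : s1 *m Twphi ws2s1 = Twphi ws1s2s1.
Proof. by rewrite Twphi_s2s1 Twphi_s1s2s1. Qed.
Lemma S1_Twphi_s1s2s1 :
  s1 *m Twphi ws1s2s1 = qq *: Twphi ws2s1 + (qq - 1) *: Twphi ws1s2s1.
Proof. by rewrite Twphi_s1s2s1 (S1_quadratic_vec hH) Twphi_s2s1. Qed.

Lemma Twcomb_expand c : Twcomb c =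
  c w1 *: Twphi w1 + c ws1 *: Twphi ws1 + c ws2 *: Twphi ws2 +
  c ws1s2 *: Twphi ws1s2 + c ws2s1 *: Twphi ws2s1 + c ws1s2s1 *: Twphi ws1s2s1.
Proof. by rewrite /Twcomb /S3_all !big_cons big_nil addr0 !addrA. Qed.

Lemma Twcomb_add c d : Twcomb c + Twcomb d = Twcomb (fun w => c w + d w).
Proof. by rewrite /Twcomb -big_split; apply: eq_bigr => w _; rewrite scalerDl. Qed.

Lemma Twcomb_scale a c : a *: Twcomb c = Twcomb (fun w => a * c w).
Proof. by rewrite /Twcomb scaler_sumr; apply: eq_bigr => w _; rewrite scalerA. Qed.

Lemma eq_Twcomb c d : c =1 d -> Twcomb c = Twcomb d.
Proof. by move=> eq_cd; apply: eq_bigr => w _; rewrite eq_cd. Qed.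

Definition delta1 (w : S3w) : E := if w is w1 then 1 else 0.

Lemma Twcomb_delta1 : Twcomb delta1 = phi.
Proof. by rewrite Twcomb_expand /= !scale0r !addr0 scale1r Twphi1. Qed.

Lemma mulmx_Twcomb (A : 'M[E]_6) (f : S3w -> S3w -> E) :
  (forall u, A *m Twphi u = Twcomb (f u)) ->
  forall c, A *m Twcomb c = Twcomb (fun x => \sum_(u <- S3_all) c u * f u x).
Proof.
move=> A_Twphi c; rewrite /Twcomb mulmx_sumr.
under eq_bigr => u _ do rewrite -scalemxAr A_Twphi scaler_sumr.
rewrite exchange_big; apply: eq_bigr => x _.
by rewrite scaler_suml; apply: eq_bigr => u _; rewrite scalerA.
Qed.

Definition T_coef (u x : S3w) : E :=
  match u, x with
  | w1, ws2s1 | ws2, ws1s2s1 => qq^-1 * y1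
  | ws1, ws2 | ws2s1, ws1s2 => y2
  | ws1s2, w1 | ws1s2s1, ws1 => qq * y3
  | _, _ => 0
  end.

Definition Tinv_coef (u x : S3w) : E :=
  match u, x with
  | ws2s1, w1 | ws1s2s1, ws2 => (qq^-1 * y1)^-1
  | ws2, ws1 | ws1s2, ws2s1 => y2^-1
  | w1, ws1s2 | ws1, ws1s2s1 => (qq * y3)^-1
  | _, _ => 0
  end.

Definition S1_coef (u x : S3w) : E :=
  match u, x with
  | w1, ws1 | ws2, ws1s2 | ws2s1, ws1s2s1 => 1
  | ws1, w1 | ws1s2, ws2 | ws1s2s1, ws2s1 => qq
  | ws1, ws1 | ws1s2, ws1s2 | ws1s2s1, ws1s2s1 => qq - 1
  | _, _ => 0
  end.

Lemma T_Twphi u : t *m Twphi u = Twcomb (T_coef u).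
Proof.
rewrite Twcomb_expand; case: u => /=; rewrite !scale0r ?add0r ?addr0.
- exact: T_Twphi1.
- exact: T_Twphi_s1.
- exact: T_Twphi_s2.
- exact: T_Twphi_s1s2.
- exact: T_Twphi_s2s1.
- exact: T_Twphi_s1s2s1.
Qed.

Lemma qinv_y1_neq0 : qq^-1 * y1 != 0. Proof. by rewrite mulf_neq0 ?invr_eq0. Qed.
Lemma q_y3_neq0 : qq * y3 != 0. Proof. by rewrite mulf_neq0. Qed.

Lemma Tinv_Twphi u : invmx t *m Twphi u = Twcomb (Tinv_coef u).
Proof.
have T_unit := unitmx_T hH.
rewrite Twcomb_expand; case: u => /=; rewrite !scale0r ?add0r ?addr0.
- exact: invmx_mul_scale q_y3_neq0 T_Twphi_s1s2.
- exact: invmx_mul_scale q_y3_neq0 T_Twphi_s1s2s1.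
- exact: invmx_mul_scale y2_neq0 T_Twphi_s1.
- exact: invmx_mul_scale y2_neq0 T_Twphi_s2s1.
- exact: invmx_mul_scale qinv_y1_neq0 T_Twphi1.
- exact: invmx_mul_scale qinv_y1_neq0 T_Twphi_s2.
Qed.

Lemma S1_Twphi u : s1 *m Twphi u = Twcomb (S1_coef u).
Proof.
rewrite Twcomb_expand; case: u => /=; rewrite !scale0r ?scale1r ?add0r ?addr0.
- exact: S1_Twphi1.
- exact: S1_Twphi_s1.
- exact: S1_Twphi_s2.
- exact: S1_Twphi_s1s2.
- exact: S1_Twphi_s2s1.
- exact: S1_Twphi_s1s2s1.
Qed.

Variables (O : pred E) (b : bool).
Hypothesis hO : valuation_ring O.
Hypotheses (y123_int : y1 * y2 * y3 \in O) (y123_inv_int : (y1 * y2 * y3)^-1 \in O)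
  (q_y12_inv_int : qq * (y1 * y2)^-1 \in O) (q_y1_inv_int : qq * y1^-1 \in O)
  (q_y2_int : qq * y2 \in O) (q_y2_inv_int : qq * y2^-1 \in O)
  (y1_int : y1 \in O).
Hypothesis hb : if b then y2^-1 \in O else y2 \in O.

Local Notation Q := (qwy b q y1 y2).
Local Notation L := (Lspan O b q y1 y2 t s1 phi).

Lemma valuation_ring_subring_closed : subring_closed O.
Proof. by case: hO. Qed.

HB.instance Definition _ := GRing.isSubringClosed.Build E O valuation_ring_subring_closed.

Lemma qwy_neq0 w : Q w != 0.
Proof. by case: b; case: w => /=; rewrite ?oner_eq0 ?invr_eq0 ?mulf_neq0 ?invr_eq0. Qed.

Lemma Lspan_mulmx (A : 'M[E]_6) (f : S3w -> S3w -> E) :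
  (forall u, A *m Twphi u = Twcomb (f u)) ->
  (forall u x, Q u * f u x / Q x \in O) ->
  forall v, L v -> L (A *m v).
Proof.
move=> A_Twphi f_int v [c [c_int ->]]; rewrite (mulmx_Twcomb A_Twphi).
exists (fun x => \sum_(u <- S3_all) c u * (Q u * f u x / Q x)); split.
  by move=> x; apply: rpred_sum => u _; rewrite rpredM.
apply: eq_Twcomb => x; rewrite mulr_suml; apply: eq_bigr => u _.
by rewrite -[RHS]mulrA divfK ?qwy_neq0 // mulrA.
Qed.

Ltac field_nz := field; by rewrite ?oner_eq0 ?q_neq0 ?y1_neq0 ?y2_neq0 ?y3_neq0.

(* Each nonzero entry is, as a rational function of q, y1, y2, y3, equal to one
   of the integral elements in the context. *)
Ltac integral_entry :=
  match goal with
  | |- is_true (?e \in O) =>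
    first [ exact: rpred0
          | match goal with H : is_true (?k \in O) |- _ =>
              rewrite (_ : e = k); [exact: H | field_nz] end ]
  end.

Ltac integral_entries :=
  have one_int : 1 \in O by [exact: rpred1];
  have q_int : qq \in O by [exact: rpred_nat];
  have q1_int : qq - 1 \in O by [rewrite rpredB ?rpred1];
  case: b hb => b_int; case; case => /=; rewrite ?(mulr0, mul0r);
  try (have y12_int : y1 * y2 \in O := rpredM y1_int b_int);
  integral_entry.

Lemma T_coef_integral : forall u x, Q u * T_coef u x / Q x \in O.
Proof. integral_entries. Qed.

Lemma Tinv_coef_integral : forall u x, Q u * Tinv_coef u x / Q x \in O.
Proof. integral_entries. Qed.

Lemma S1_coef_integral : forall u x, Q u * S1_coef u x / Q x \in O.
Proof. integral_entries. Qed.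

Lemma Lspan_T v : L v -> L (t *m v).
Proof. exact: Lspan_mulmx T_Twphi T_coef_integral v. Qed.

Lemma Lspan_Tinv v : L v -> L (invmx t *m v).
Proof. exact: Lspan_mulmx Tinv_Twphi Tinv_coef_integral v. Qed.

Lemma Lspan_S1 v : L v -> L (s1 *m v).
Proof. exact: Lspan_mulmx S1_Twphi S1_coef_integral v. Qed.

Local Notation HO_phi := (cyc_span O t s1 phi).

Lemma cyc_span_qwy_Twphi w : HO_phi (Q w *: Twphi w).
Proof.
have T_unit := unitmx_T hH.
have := invmx_mul_scale T_unit q_y3_neq0 T_Twphi_s1s2; rewrite Twphi1 => Tinv_phi.
have Tinv_Twphi_s1s2s1 := invmx_mul_scale T_unit qinv_y1_neq0 T_Twphi_s2.
have Tinv_Twphi_s2 := invmx_mul_scale T_unit y2_neq0 T_Twphi_s1.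
have phi_in : HO_phi phi := cs_gen _ _ _ _.
case: w => /=.
- by rewrite scale1r Twphi1.
- case: b; rewrite ?scale1r.
  + by rewrite -S1_Twphi1 Twphi1; apply: cs_S1.
  + have -> : y2^-1 *: Twphi ws1 = invmx t *m (invmx t *m (s1 *m (t *m phi))).
      rewrite -Twphi1 T_Twphi1 -!scalemxAr S1_Twphi_s2s1 Tinv_Twphi_s1s2s1 -scalemxAr.
      by rewrite Tinv_Twphi_s2 !scalerA; congr (_ *: _); field_nz.
    by do 2!apply: cs_Tinv; apply: cs_S1; apply: cs_T.
- case: b; rewrite ?scale1r.
  + by rewrite -T_Twphi_s1 Twphi_s1; apply: cs_T; apply: cs_S1.
  + have -> : Twphi ws2 = invmx t *m (s1 *m (t *m phi)).
      rewrite -Twphi1 T_Twphi1 -!scalemxAr S1_Twphi_s2s1 Tinv_Twphi_s1s2s1 scalerA.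
      by rewrite mulfV ?invr_eq0 ?qinv_y1_neq0 // scale1r.
    by apply: cs_Tinv; apply: cs_S1; apply: cs_T.
- have -> : (qq^-1 * y1 * y2) *: Twphi ws1s2 = (y1 * y2 * y3) *: (invmx t *m phi).
    by rewrite Tinv_phi scalerA; congr (_ *: _); field_nz.
  by apply: cs_scale => //; apply: cs_Tinv.
- by rewrite -T_Twphi1 Twphi1; apply: cs_T.
- case: b.
  + have -> : (qq^-1 * y1 * y2) *: Twphi ws1s2s1 = t *m (t *m (s1 *m phi)).
      rewrite -Twphi_s1 T_Twphi_s1 -scalemxAr T_Twphi_s2 scalerA.
      by congr (_ *: _); field_nz.
    by do 2!apply: cs_T; apply: cs_S1.
  + by rewrite -S1_Twphi_s2s1 scalemxAr -T_Twphi1 Twphi1; apply: cs_S1; apply: cs_T.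
Qed.

Lemma Lspan_cyc_span v : L v -> HO_phi v.
Proof.
case=> c [c_int ->]; elim: S3_all => [|w s IHs].
  by rewrite big_nil -(scale0r phi); apply: cs_scale; [exact: rpred0 | exact: cs_gen].
rewrite big_cons -scalerA; apply: cs_add => //.
by apply: cs_scale => //; apply: cyc_span_qwy_Twphi.
Qed.

Lemma cyc_span_Lspan v : HO_phi v -> L v.
Proof.
elim=> {v}.
- exists delta1; split; first by case; rewrite /= ?rpred0 ?rpred1.
  by rewrite -{1}Twcomb_delta1; apply: eq_Twcomb; case; rewrite /= ?mul1r ?mul0r.
- move=> v w _ [c [c_int ->]] _ [d [d_int ->]]; exists (fun w => c w + d w); split.
    by move=> x; apply: rpredD.
  by rewrite Twcomb_add; apply: eq_Twcomb => x; rewrite mulrDl.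
- move=> a v a_int _ [c [c_int ->]]; exists (fun w => a * c w); split.
    by move=> x; apply: rpredM.
  by rewrite Twcomb_scale; apply: eq_Twcomb => x; rewrite mulrA.
- by move=> v _; apply: Lspan_T.
- by move=> v _; apply: Lspan_Tinv.
- by move=> v _; apply: Lspan_S1.
Qed.

Lemma Lspan_H_stable v : L v -> [/\ L (t *m v), L (invmx t *m v) & L (s1 *m v)].
Proof. by move=> Lv; split; [apply: Lspan_T | apply: Lspan_Tinv | apply: Lspan_S1]. Qed.

Lemma Lspan_eq_cyc_span v : L v <-> HO_phi v.
Proof. by split; [apply: Lspan_cyc_span | apply: cyc_span_Lspan]. Qed.

Lemma cyc_span_Twcomb v : cyc_span predT t s1 phi v -> exists c, v = Twcomb c.
Proof.
elim=> {v}.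
- by exists delta1; rewrite Twcomb_delta1.
- by move=> v w _ [c ->] _ [d ->]; exists (fun w => c w + d w); rewrite Twcomb_add.
- by move=> a v _ _ [c ->]; exists (fun w => a * c w); rewrite Twcomb_scale.
- by move=> v _ [c ->]; eexists; rewrite (mulmx_Twcomb T_Twphi).
- by move=> v _ [c ->]; eexists; rewrite (mulmx_Twcomb Tinv_Twphi).
- by move=> v _ [c ->]; eexists; rewrite (mulmx_Twcomb S1_Twphi).
Qed.

Definition S3_of_ord (j : 'I_6) : S3w := nth w1 S3_all j.

Lemma S3_of_ord_surj w : exists j, S3_of_ord j = w.
Proof. by case: w; [exists 0 | exists 1 | exists 2 | exists 3 | exists 4 | exists 5]. Qed.

Definition Twmx : 'M[E]_6 := \matrix_(i, j) Twphi (S3_of_ord j) i 0.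

Definition coord_col (c : S3w -> E) : 'cV[E]_6 := \col_j c (S3_of_ord j).

Lemma Twmx_coord_col c : Twmx *m coord_col c = Twcomb c.
Proof.
apply/matrixP => i k; rewrite (ord1 k) !mxE /Twcomb summxE (big_nth w1) big_mkord.
by apply: eq_bigr => j _; rewrite !mxE mulrC.
Qed.

Hypothesis phi_gen : forall v, cyc_span predT t s1 phi v.

Lemma unitmx_Twmx : Twmx \in unitmx.
Proof.
apply: unitmx_of_spanning => v; have [c ->] := cyc_span_Twcomb (phi_gen v).
by exists (coord_col c); rewrite Twmx_coord_col.
Qed.

Lemma Twcomb_eq0 c : Twcomb c = 0 -> forall w, c w = 0.
Proof.
move=> c0 w; have [j <-] := S3_of_ord_surj w.
have : coord_col c = 0 by rewrite -(mulKmx unitmx_Twmx (coord_col c)) Twmx_coord_col c0 mulmx0.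
by move/matrixP/(_ j 0); rewrite !mxE.
Qed.

Lemma qwy_Twcomb_eq0 c : Twcomb (fun w => c w * Q w) = 0 -> forall w, c w = 0.
Proof.
move=> c0 w; have /eqP := Twcomb_eq0 c0 w.
by rewrite mulf_eq0 (negbTE (qwy_neq0 _)) orbF => /eqP.
Qed.

End StandardModule.

Theorem proposition3
  (* residue characteristic p and q = p^f *)
  (p f : nat) (hp : prime p) (hf : (0 < f)%N)
  (* coefficient field E (char 0) with valuation ring O_E, p not a unit *)
  (E : fieldType) (O : pred E)
  (hchar : forall n : nat, (n.+1)%:R != 0 :> E)
  (hO : valuation_ring O) (hpO : (p%:R : E)^-1 \notin O)
  (* the standard module I_A(chi) with canonical generator Phi, presented as *)
  (* a 6-dimensional H_E-module generated by a vector on which A acts by chi *)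
  (t s1 : 'M[E]_6) (phi : 'cV[E]_6)
  (hH : hecke_rels (p ^ f) t s1)
  (y1 y2 y3 : E) (hy1 : y1 != 0) (hy2 : y2 != 0) (hy3 : y3 != 0)
  (hY1 : Y1op (p ^ f) t s1 *m phi = y1 *: phi)
  (hY2 : Y2op t s1 *m phi = y2 *: phi)
  (hY3 : Y3op (p ^ f) t s1 *m phi = y3 *: phi)
  (hgen : forall v, cyc_span predT t s1 phi v)
  (* chi is ordinary *)
  (hord : ordinary O (p ^ f) y1 y2 y3)
  (* choice of branch for q(w,y) *)
  (b : bool) (hb : if b then y2^-1 \in O else y2 \in O) :
  (* L(chi) = H_{O_E} Phi *)
  (forall v, Lspan O b (p ^ f) y1 y2 t s1 phi v <-> cyc_span O t s1 phi v)
  (* the q(w,y) T_w Phi are E-linearly independent (hence an E-basis of the *)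
  (* 6-dimensional module and an O_E-basis of L(chi)) *)
  /\ (forall c : S3w -> E,
        \sum_(w <- S3_all) (c w * qwy b (p ^ f) y1 y2 w) *: (Tw t s1 w *m phi) = 0 ->
        forall w, c w = 0)
  (* L(chi) is H_{O_E}-stable *)
  /\ (forall v, Lspan O b (p ^ f) y1 y2 t s1 phi v ->
        [/\ Lspan O b (p ^ f) y1 y2 t s1 phi (t *m v),
            Lspan O b (p ^ f) y1 y2 t s1 phi (invmx t *m v) &
            Lspan O b (p ^ f) y1 y2 t s1 phi (s1 *m v)]).
Proof.
have q_neq0 : ((p ^ f)%:R : E) != 0.
  have q_gt0 : (0 < p ^ f)%N by rewrite expn_gt0 prime_gt0.
  by rewrite -(prednK q_gt0) hchar.
case: hord => [[y123_int y123_inv_int] [[_ q_y12_inv_int] _]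
  [[_ q_y1_inv_int] [[q_y2_int q_y2_inv_int] _]] [y1_int _]].
split; [|split].
- by move=> v; apply: (Lspan_eq_cyc_span (y3 := y3)).
- by move=> c; apply: (qwy_Twcomb_eq0 (y3 := y3)).
- by move=> v; apply: (Lspan_H_stable (y3 := y3)).
Qed.
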